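(* If $n$ is a non-negative integer and $s$ is a complex number that is not a negative integer, then $$\sum_{k = 1}^n \sum_{j = 0}^{k - 1} \frac{(- 1)^j s}{k - j} \binom{s}{n - j} = s\binom{s - 1}{n} H_n + \binom{s - 1}{n} - (- 1)^n.$$
   Context: For complex $s$ and non-negative integer $m$, $\binom{s}{m}=\frac{s(s-1)\cdots(s-m+1)}{m!}$. $H_n=\sum_{i=1}^n\frac1i$. Empty sums are zero. *)

From HB Require Import structures.
From mathcomp Require Import all_boot all_order all_algebra.
From mathcomp Require Import complex.
From mathcomp Require Import reals.
Set Implicit Arguments. Unset Strict Implicit. Unset Printing Implicit Defensive.
Import Order.TTheory GRing.Theory Num.Theory.
Local Open Scope ring_scope.

Definition binomC (F : fieldType) (s : F) (m : nat) : F :=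
  (\prod_(i < m) (s - i%:R)) / (m`!)%:R.

Definition harmonic (F : fieldType) (n : nat) : F :=
  \sum_(1 <= i < n.+1) (i%:R)^-1.

(* Write [c n] for [binomC (s - 1) n] and [A n] for the alternating sum
   [\sum_(j < n) (-1)^j binomC s (n - j) H_(n - j)].  Exchanging the double sum
   and summing [1/m] over [1 <= m <= n - j] turns the left-hand side into
   [s * A n].  Since [A n.+1 = binomC s n.+1 H_(n+1) - A n], it suffices that
   the right-hand side [T n] satisfies the same recurrence, i.e.
   [T n.+1 + T n = s * binomC s n.+1 * H_(n+1)]; this follows from Pascal's
   rule [c n + c n.+1 = binomC s n.+1] and the absorption identity
   [s * c n = n.+1 * binomC s n.+1]. *)

From mathcomp Require Import all_boot all_order all_algebra.
From mathcomp Require Import complex.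
From mathcomp Require Import reals.
From mathcomp Require Import ring.
Import GRing.Theory Num.Theory.
Local Open Scope ring_scope.

Lemma exchange_big_nat_triangle {V : nmodType} (n : nat) (g : nat -> nat -> V) :
  \sum_(1 <= k < n.+1) \sum_(0 <= j < k) g j (k - j)%N
  = \sum_(0 <= j < n) \sum_(1 <= m < (n - j).+1) g j m.
Proof.
elim: n => [|n IH]; first by rewrite !big_geq.
rewrite big_nat_recr //= IH.
have -> : \sum_(0 <= j < n.+1) \sum_(1 <= m < (n.+1 - j).+1) g j m
        = \sum_(0 <= j < n.+1) (\sum_(1 <= m < (n - j).+1) g j m + g j (n.+1 - j)%N).
  apply: eq_big_nat => j /andP[_ ltjn].
  by rewrite subSn // big_nat_recr //= -subSn.
by rewrite big_split /= [in RHS]big_nat_recr //= subnn [X in _ + X + _]big_geq // addr0.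
Qed.

Lemma binomC0 (F : fieldType) (x : F) : binomC x 0 = 1.
Proof. by rewrite /binomC big_ord0 fact0 divr1. Qed.

Section GeneralizedBinomial.
Variable F : numFieldType.
Implicit Types (x : F) (n : nat).

Lemma binomCSr x n : binomC x n.+1 = binomC x n * (x - n%:R) / n.+1%:R.
Proof.
rewrite /binomC big_ord_recr /= factS natrM.
by field; rewrite nat1r !pnatr_eq0 -!lt0n fact_gt0.
Qed.

Lemma binomC_absorption x n : binomC x n.+1 = x / n.+1%:R * binomC (x - 1) n.
Proof.
rewrite /binomC big_ord_recl /= subr0 factS natrM.
have -> : \prod_(i < n) (x - (bump 0 i)%:R) = \prod_(i < n) (x - 1 - i%:R).
  by apply: eq_bigr => i _; rewrite /bump /= natrD opprD addrA.
by field; rewrite nat1r !pnatr_eq0 -lt0n fact_gt0.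
Qed.

Lemma binomC_pascal x n : binomC x n.+1 = binomC (x - 1) n + binomC (x - 1) n.+1.
Proof.
rewrite binomC_absorption binomCSr.
by field; rewrite nat1r pnatr_eq0.
Qed.

End GeneralizedBinomial.

Lemma harmonic0 (F : fieldType) : harmonic F 0 = 0.
Proof. by rewrite /harmonic big_geq. Qed.

Lemma harmonicS (F : fieldType) (n : nat) :
  harmonic F n.+1 = harmonic F n + n.+1%:R^-1.
Proof. by rewrite /harmonic big_nat_recr. Qed.

Definition alt_sum_binomC_harmonic {F : fieldType} (s : F) (n : nat) : F :=
  \sum_(0 <= j < n) (-1) ^+ j * binomC s (n - j) * harmonic F (n - j).

Lemma alt_sum_binomC_harmonicS (F : fieldType) (s : F) (n : nat) :
  alt_sum_binomC_harmonic s n.+1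
  = binomC s n.+1 * harmonic F n.+1 - alt_sum_binomC_harmonic s n.
Proof.
rewrite /alt_sum_binomC_harmonic big_nat_recl //= expr0 mul1r subn0.
rewrite -sumrN; congr (_ + _); apply: eq_bigr => j _.
by rewrite subSS exprS !mulN1r !mulNr.
Qed.

Lemma alt_sum_binomC_harmonicE (F : numFieldType) (s : F) (n : nat) :
  s * alt_sum_binomC_harmonic s n
  = s * binomC (s - 1) n * harmonic F n + binomC (s - 1) n - (-1) ^+ n.
Proof.
elim: n => [|n IH].
  rewrite /alt_sum_binomC_harmonic big_geq // binomC0 harmonic0 expr0.
  by rewrite !mulr0 add0r subrr.
rewrite alt_sum_binomC_harmonicS mulrBr IH.
have -> : binomC (s - 1) n.+1 = binomC s n.+1 - binomC (s - 1) n.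
  by rewrite (@binomC_pascal _ s) addrAC subrr add0r.
rewrite binomC_absorption harmonicS exprS.
by field; rewrite nat1r pnatr_eq0.
Qed.

Theorem proposition21 (R : realType) (n : nat) (s : R[i])
  (hs : forall m : nat, s <> - (m.+1)%:R) :
  \sum_(1 <= k < n.+1) \sum_(0 <= j < k)
      ((-1) ^+ j * s / (k - j)%:R) * binomC s (n - j)
  = s * binomC (s - 1) n * harmonic _ n + binomC (s - 1) n - (-1) ^+ n.
Proof.
rewrite -alt_sum_binomC_harmonicE.
rewrite (exchange_big_nat_triangle n (fun j m => (-1) ^+ j * s / m%:R * binomC s (n - j))).
rewrite /alt_sum_binomC_harmonic mulr_sumr; apply: eq_bigr => j _.
rewrite /harmonic !mulr_sumr; apply: eq_bigr => m _.
by rewrite mulrAC [(-1) ^+ j * s]mulrC -!mulrA.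
Qed.
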